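(* Let $|\psi_{{\sf A}{\sf B}}\rangle\in\mathbb C^{d_{\sf A}}\otimes\mathbb C^{d_{\sf B}}$ be a unit vector, $\rho_{\sf A}=\mathrm{tr}_{\sf B}(|\psi_{{\sf A}{\sf B}}\rangle\langle\psi_{{\sf A}{\sf B}}|)$, and $\bar\omega_{\sf A}=\mathrm{tr}_{\sf B}\big(S_{\sf B}|\psi_{{\sf A}{\sf B}}\rangle\langle\psi_{{\sf A}{\sf B}}|^{\otimes2}\big)+\frac{S_{\sf A}}{\mathrm{tr}S_{\sf A}}\,\mathrm{tr}\big(A_{\sf A}A_{\sf B}|\psi_{{\sf A}{\sf B}}\rangle\langle\psi_{{\sf A}{\sf B}}|^{\otimes2}\big)$. Then $\bar\omega_{\sf A}=S_{\sf A}(\rho_{\sf A}\otimes\rho_{\sf A})S_{\sf A}+\big(1-\mathrm{tr}(S_{\sf A}(\rho_{\sf A}\otimes\rho_{\sf A})S_{\sf A})\big)\tilde S_{\sf A}$.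
   Context: $|\psi_{{\sf A}{\sf B}}\rangle^{\otimes2}$ is regarded as a vector in $\mathbb C^{d_{\sf A}}_1\otimes\mathbb C^{d_{\sf B}}_2\otimes\mathbb C^{d_{\sf A}}_3\otimes\mathbb C^{d_{\sf B}}_4$; $\mathrm{tr}_{\sf B}$ is the partial trace over factors $2,4$. $S_{\sf A}$, $A_{\sf A}$ are the projectors onto the symmetric and antisymmetric subspaces of $\mathbb C^{d_{\sf A}}_1\otimes\mathbb C^{d_{\sf A}}_3$; $S_{\sf B}$, $A_{\sf B}$ those of $\mathbb C^{d_{\sf B}}_2\otimes\mathbb C^{d_{\sf B}}_4$ (extended by identities where needed); $\tilde S_{\sf A}=S_{\sf A}/\mathrm{tr}S_{\sf A}$. *)

From HB Require Import structures.
From mathcomp Require Import all_boot all_order all_algebra.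
Import Order.TTheory GRing.Theory Num.Theory.
Local Open Scope ring_scope.

(* Finite-dimensional linear algebra over C (a numeric closed field, e.g. the
   complex numbers).  The Hilbert space C^T has the orthonormal basis indexed by
   a finType T; an operator on it is given by its matrix  T -> T -> C.
   Tensor products C^T1 (x) C^T2 = C^(T1*T2). *)

Definition op (C : numClosedFieldType) (T : finType) := T -> T -> C.

Section Ops.
Variable C : numClosedFieldType.
Implicit Types T : finType.

Definition idop T : op C T := fun i j => (i == j)%:R.
Definition addo T (A B : op C T) : op C T := fun i j => A i j + B i j.
Definition scaleo T (c : C) (A : op C T) : op C T := fun i j => c * A i j.
Definition mulo T (A B : op C T) : op C T :=
  fun i j => \sum_(k : T) A i k * B k j.
Definition tro T (A : op C T) : C := \sum_(i : T) A i i.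

Definition tens T1 T2 (A : op C T1) (B : op C T2) : op C (prod T1 T2) :=
  fun i j => A i.1 j.1 * B i.2 j.2.
Definition tensv T1 T2 (u : T1 -> C) (v : T2 -> C) : prod T1 T2 -> C :=
  fun i => u i.1 * v i.2.

Definition ketbra T (u : T -> C) : op C T := fun i j => u i * (u j)^*.

Definition ptr2 T1 T2 (M : op C (prod T1 T2)) : op C T1 :=
  fun i j => \sum_(k : T2) M (i, k) (j, k).

Definition swapo T : op C (prod T T) :=
  fun i j => ((i.1 == j.2) && (i.2 == j.1))%:R.
Definition symP T : op C (prod T T) :=
  scaleo _ (2^-1) (addo _ (idop (prod T T)) (swapo T)).
Definition antP T : op C (prod T T) :=
  scaleo _ (2^-1) (addo _ (idop (prod T T)) (scaleo _ (-1) (swapo T))).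

(* The space C^dA_1 (x) C^dB_2 (x) C^dA_3 (x) C^dB_4 is indexed by
   (TA * TB) * (TA * TB).  [regroup] reorders into (factors 1,3) * (factors 2,4). *)
Definition regroup (TA TB : finType) (x : prod (prod TA TB) (prod TA TB)) :
  prod (prod TA TA) (prod TB TB) := ((x.1.1, x.2.1), (x.1.2, x.2.2)).
Definition ungroup (TA TB : finType) (y : prod (prod TA TA) (prod TB TB)) :
  prod (prod TA TB) (prod TA TB) := ((y.1.1, y.2.1), (y.1.2, y.2.2)).

(* an operator on (1,3) (x) (2,4), viewed as an operator on 1 (x) 2 (x) 3 (x) 4 *)
Definition liftAB (TA TB : finType) (K : op C (prod (prod TA TA) (prod TB TB))) :
  op C (prod (prod TA TB) (prod TA TB)) := fun x y => K (regroup TA TB x) (regroup TA TB y).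
(* partial trace tr_B over factors 2,4, giving an operator on factors 1,3 *)
Definition ptrB (TA TB : finType) (M : op C (prod (prod TA TB) (prod TA TB))) :
  op C (prod TA TA) := ptr2 _ _ (fun x y => M (ungroup TA TB x) (ungroup TA TB y)).

(* S_A, A_A (on factors 1,3) and S_B, A_B (on factors 2,4), each extended by
   the identity on the remaining factors *)
Definition SAx (TA TB : finType) := liftAB TA TB (tens _ _ (symP TA) (idop (prod TB TB))).
Definition AAx (TA TB : finType) := liftAB TA TB (tens _ _ (antP TA) (idop (prod TB TB))).
Definition SBx (TA TB : finType) := liftAB TA TB (tens _ _ (idop (prod TA TA)) (symP TB)).
Definition ABx (TA TB : finType) := liftAB TA TB (tens _ _ (idop (prod TA TA)) (antP TB)).

End Ops.

(* With rho = tr_B |psi><psi| and the swaps F_A, F_B of the two copies, every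
   projector in the statement has the form (1 +- F)/2, so all identities reduce
   to index bookkeeping.  Tracing out B gives tr_B(S_B |psi psi><psi psi|) =
   S_A (rho (x) rho), and S_A (rho (x) rho) S_A = S_A (rho (x) rho) because
   rho (x) rho commutes with F_A.  The traces are tr(A_A A_B |psi psi><psi psi|)
   = (1 - tr rho^2)/2 and tr(S_A (rho (x) rho)) = (1 + tr rho^2)/2 (using
   tr rho = 1), so both sides carry the same multiple of S_A / tr S_A. *)

From HB Require Import structures.
From mathcomp Require Import all_boot all_order all_algebra.
From mathcomp Require Import ring.
From Stdlib Require Import FunctionalExtensionality.
Import Order.TTheory GRing.Theory Num.Theory.
Local Open Scope ring_scope.

Section Operators.
Variable C : numClosedFieldType.
Implicit Types T : finType.

Lemma sum_delta T (j : T) (F : T -> C) : \sum_i (j == i)%:R * F i = F j.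
Proof.
rewrite (bigD1 j) //= eqxx mul1r big1 ?addr0 // => i.
by rewrite eq_sym => /negbTE ->; rewrite mul0r.
Qed.

Lemma sum_delta_r T (j : T) (F : T -> C) : \sum_i F i * (i == j)%:R = F j.
Proof.
by rewrite -[RHS](sum_delta _ j); apply: eq_bigr => i _; rewrite mulrC eq_sym.
Qed.

Lemma sum_pair T1 T2 (F : T1 * T2 -> C) : \sum_x F x = \sum_i \sum_j F (i, j).
Proof. by rewrite pair_bigA; apply: eq_bigr => -[]. Qed.

Lemma sum_pair_pair T1 T2 (F : (T1 * T2) * (T1 * T2) -> C) :
  \sum_x F x = \sum_a1 \sum_a3 \sum_b1 \sum_b3 F ((a1, b1), (a3, b3)).
Proof.
rewrite !sum_pair; apply: eq_bigr => a1 _.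
rewrite exchange_big /= sum_pair; apply: eq_bigr => a3 _.
by rewrite exchange_big.
Qed.

Lemma natr_pair_eq T1 T2 (a a' : T1) (b b' : T2) :
  (((a, b) == (a', b'))%:R : C) = (a == a')%:R * (b == b')%:R.
Proof. by rewrite xpair_eqE -natrM mulnb. Qed.

Lemma muloA T (A B M : op C T) : mulo C T (mulo C T A B) M = mulo C T A (mulo C T B M).
Proof.
apply: functional_extensionality => x; apply: functional_extensionality => y.
rewrite /mulo; under eq_bigr => k _ do rewrite mulr_suml.
rewrite exchange_big; apply: eq_bigr => l _; rewrite mulr_sumr.
by apply: eq_bigr => k _; rewrite mulrA.
Qed.

Definition sign_proj {T} (s : C) (f : T -> T) : op C T :=
  fun i j => 2^-1 * ((i == j)%:R + s * (f i == j)%:R).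

Lemma mulo_sign_projl T (s : C) (f : T -> T) (M : op C T) x y :
  mulo C T (sign_proj s f) M x y = 2^-1 * (M x y + s * M (f x) y).
Proof.
rewrite /mulo /sign_proj.
under eq_bigr => k _ do rewrite -mulrA mulrDl -mulrA.
by rewrite -mulr_sumr big_split -mulr_sumr /= !sum_delta.
Qed.

Lemma mulo_sign_projr T (s : C) (f : T -> T) (M : op C T) x y :
  involutive f -> mulo C T M (sign_proj s f) x y = 2^-1 * (M x y + s * M x (f y)).
Proof.
move=> f_inv; rewrite /mulo /sign_proj.
under eq_bigr => k _ do rewrite (inv_eq f_inv) mulrCA mulrDr (mulrCA _ s).
by rewrite -mulr_sumr big_split -mulr_sumr /= !sum_delta_r.
Qed.

End Operators.

Arguments sign_proj {C T}.

Definition swap_pair {T1 T2 : Type} (x : T1 * T2) : T2 * T1 := (x.2, x.1).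

Lemma swap_pairK (T : Type) : involutive (@swap_pair T T).
Proof. by case. Qed.

Section SwapProjectors.
Variable C : numClosedFieldType.

Lemma symPE (T : finType) : symP C T = sign_proj 1 swap_pair.
Proof.
apply: functional_extensionality => -[a b]; apply: functional_extensionality => -[c d].
rewrite /symP /sign_proj /scaleo /addo /idop /swapo /swap_pair /=.
by rewrite !natr_pair_eq; ring.
Qed.

Lemma antPE (T : finType) : antP C T = sign_proj (-1) swap_pair.
Proof.
apply: functional_extensionality => -[a b]; apply: functional_extensionality => -[c d].
rewrite /antP /sign_proj /scaleo /addo /idop /swapo /swap_pair /=.
by rewrite !natr_pair_eq; ring.
Qed.

Variables TA TB : finType.
Local Notation T4 := ((TA * TB) * (TA * TB))%type.

Definition swapA (x : T4) : T4 := ((x.2.1, x.1.2), (x.1.1, x.2.2)).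
Definition swapB (x : T4) : T4 := ((x.1.1, x.2.2), (x.2.1, x.1.2)).

Lemma swapA_swapB x : swapA x = swap_pair (swapB x).
Proof. by case: x => -[? ?] []. Qed.

Lemma swapB_swapA x : swapB (swapA x) = swap_pair x.
Proof. by case: x => -[? ?] []. Qed.

Lemma liftAB_tens_sign_proj_id (s : C) :
  liftAB C TA TB (tens C _ _ (sign_proj s swap_pair) (idop C (TB * TB)%type)) = sign_proj s swapA.
Proof.
apply: functional_extensionality => -[[a1 b1] [a3 b3]].
apply: functional_extensionality => -[[c1 d1] [c3 d3]].
rewrite /liftAB /tens /sign_proj /idop /regroup /swap_pair /swapA /= !natr_pair_eq.
ring.
Qed.

Lemma liftAB_tens_id_sign_proj (s : C) :
  liftAB C TA TB (tens C _ _ (idop C (TA * TA)%type) (sign_proj s swap_pair)) = sign_proj s swapB.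
Proof.
apply: functional_extensionality => -[[a1 b1] [a3 b3]].
apply: functional_extensionality => -[[c1 d1] [c3 d3]].
rewrite /liftAB /tens /sign_proj /idop /regroup /swap_pair /swapB /= !natr_pair_eq.
ring.
Qed.

Lemma SBxE : SBx C TA TB = sign_proj 1 swapB.
Proof. by rewrite /SBx symPE liftAB_tens_id_sign_proj. Qed.

Lemma AAxE : AAx C TA TB = sign_proj (-1) swapA.
Proof. by rewrite /AAx antPE liftAB_tens_sign_proj_id. Qed.

Lemma ABxE : ABx C TA TB = sign_proj (-1) swapB.
Proof. by rewrite /ABx antPE liftAB_tens_id_sign_proj. Qed.

End SwapProjectors.

Arguments swapA {TA TB}.
Arguments swapB {TA TB}.

Section TensorSquare.
Variables (C : numClosedFieldType) (T : finType) (r : op C T).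

Lemma symP_tens_symP :
  mulo C _ (mulo C _ (symP C T) (tens C _ _ r r)) (symP C T) = mulo C _ (symP C T) (tens C _ _ r r).
Proof.
apply: functional_extensionality => x; apply: functional_extensionality => -[c1 c2].
rewrite symPE mulo_sign_projr; last exact: swap_pairK.
rewrite !mulo_sign_projl /tens /swap_pair /=.
by field.
Qed.

Lemma tro_symP_tens :
  tro C _ (mulo C _ (symP C T) (tens C _ _ r r)) = 2^-1 * (tro C T r ^+ 2 + tro C T (mulo C T r r)).
Proof.
rewrite /tro; under eq_bigr => x _ do rewrite symPE mulo_sign_projl.
rewrite sum_pair expr2 mulr_suml /mulo -big_split mulr_sumr; apply: eq_bigr => a _.
rewrite mulr_sumr -big_split mulr_sumr; apply: eq_bigr => b _.
by rewrite /tens /swap_pair /= mul1r (mulrC (r b a)).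
Qed.

End TensorSquare.

Section PureState.
Variables (C : numClosedFieldType) (TA TB : finType) (psi : TA * TB -> C).
Local Notation rho := (ptr2 C TA TB (ketbra C _ psi)).
Local Notation X := (ketbra C _ (tensv C _ _ psi psi)).

Lemma tro_ptr2_ketbra : tro C TA rho = \sum_x `|psi x| ^+ 2.
Proof.
rewrite /tro /ptr2 sum_pair; apply: eq_bigr => a _; apply: eq_bigr => b _.
by rewrite normCK.
Qed.

Lemma ketbra_tensv_swap y z : X (swap_pair y) z = X y z.
Proof. by rewrite /ketbra /tensv /swap_pair /= (mulrC (psi y.2)). Qed.

Lemma tro_ketbra_tensv : tro C _ X = tro C TA rho ^+ 2.
Proof.
rewrite tro_ptr2_ketbra /tro sum_pair expr2 mulr_suml; apply: eq_bigr => y _.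
rewrite mulr_sumr; apply: eq_bigr => z _.
by rewrite /ketbra /tensv /= !normCK rmorphM /=; ring.
Qed.

Lemma sum_ketbra_tensv_swapB : \sum_x X (swapB x) x = tro C TA (mulo C TA rho rho).
Proof.
rewrite sum_pair_pair /tro /mulo; apply: eq_bigr => a1 _; apply: eq_bigr => a3 _.
rewrite /ptr2 big_distrlr /= exchange_big; apply: eq_bigr => b1 _; apply: eq_bigr => b3 _.
by rewrite /ketbra /tensv /swapB /= rmorphM /=; ring.
Qed.

Lemma ptrB_SBx_ketbra :
  ptrB C TA TB (mulo C _ (SBx C TA TB) X) = mulo C _ (symP C TA) (tens C _ _ rho rho).
Proof.
apply: functional_extensionality => -[a1 a3]; apply: functional_extensionality => -[c1 c3].
rewrite SBxE symPE mulo_sign_projl /ptrB /ptr2.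
under eq_bigr => k _ do rewrite mulo_sign_projl.
rewrite -mulr_sumr big_split /= !sum_pair /tens /swap_pair /= !big_distrlr /= mul1r.
congr (2^-1 * (_ + _)); apply: eq_bigr => b1 _; apply: eq_bigr => b3 _.
  by rewrite /ketbra /tensv /= rmorphM /=; ring.
by rewrite /ketbra /tensv /swapB /= rmorphM /=; ring.
Qed.

Lemma tro_AAx_ABx_ketbra :
  tro C _ (mulo C _ (mulo C _ (AAx C TA TB) (ABx C TA TB)) X)
  = 2^-1 * (tro C TA rho ^+ 2 - tro C TA (mulo C TA rho rho)).
Proof.
rewrite muloA AAxE ABxE -tro_ketbra_tensv -sum_ketbra_tensv_swapB /tro.
(* |psi>|psi> is invariant under exchanging the two copies, i.e. under swapB \o swapA. *)
under eq_bigr => x _ do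
  rewrite !mulo_sign_projl swapB_swapA swapA_swapB !ketbra_tensv_swap.
by rewrite -sumrB mulr_sumr; apply: eq_bigr => x _; field.
Qed.

End PureState.

Theorem mainTheorem9 (C : numClosedFieldType) (dA dB : nat)
    (psi : prod 'I_dA 'I_dB -> C) :
  \sum_(x : prod 'I_dA 'I_dB) `|psi x| ^+ 2 = 1 ->
  let rhoA : op C 'I_dA := ptr2 C _ _ (ketbra C _ psi) in
  let X : op C (prod (prod 'I_dA 'I_dB) (prod 'I_dA 'I_dB)) :=
    ketbra C _ (tensv C _ _ psi psi) in
  let SA : op C (prod 'I_dA 'I_dA) := symP C 'I_dA in
  let tSA : op C (prod 'I_dA 'I_dA) := scaleo C _ (tro C _ SA)^-1 SA in
  let omegaA : op C (prod 'I_dA 'I_dA) :=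
    addo C _ (ptrB C _ _ (mulo C _ (SBx C 'I_dA 'I_dB) X))
         (scaleo C _ (tro C _ (mulo C _ (mulo C _ (AAx C 'I_dA 'I_dB) (ABx C 'I_dA 'I_dB)) X)) tSA) in
  let SrrS : op C (prod 'I_dA 'I_dA) := mulo C _ (mulo C _ SA (tens C _ _ rhoA rhoA)) SA in
  omegaA = addo C _ SrrS (scaleo C _ (1 - tro C _ SrrS) tSA).
Proof.
move=> psi_unit rhoA X SA tSA omegaA SrrS.
have tr_rhoA : tro C _ rhoA = 1 by rewrite tro_ptr2_ketbra psi_unit.
rewrite /omegaA /SrrS /SA symP_tens_symP ptrB_SBx_ketbra tro_AAx_ABx_ketbra.
rewrite tro_symP_tens tr_rhoA.
congr (addo _ _ _ (scaleo _ _ _ _)); by field.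
Qed.
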